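(* Let $k$ be an algebraically closed field of characteristic zero, $f\in k[[\mathbf x]][z]$, $\mathbf x=(x_1,\dots,x_d)$, and let $\Gamma$ be a compact $1$-dimensional face of the Newton diagram of $f$ which does not meet the hyperplane $\{z=0\}$, with face polynomial $$f_\Gamma=a_\Gamma\,\mathbf x^{\mathbf n}z^{e}\prod_{j=1}^{r}(z^{p}-\mu_j\mathbf x^{\mathbf q})^{m_j},$$ where $e\ge1$, $\gcd(\mathbf q,p)=1$, $\mu_j\in k^*$ pairwise distinct, $a_\Gamma\in k^*$. Then the Newton diagram of $f_z=\partial f/\partial z$ has a face $\Gamma'$ parallel to $\Gamma$ with $$(f_z)_{\Gamma'}=a_\Gamma\mathbf x^{\mathbf n}z^{e-1}\Big(\prod_{j=1}^r(z^p-\mu_j\mathbf x^{\mathbf q})^{m_j-1}\Big)\Big(e\prod_{j=1}^r(z^p-\mu_j\mathbf x^{\mathbf q})+p\,z^{p}\sum_{i=1}^r m_i\prod_{j\neq i}(z^p-\mu_j\mathbf x^{\mathbf q})\Big).$$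
   Context: The Newton diagram of $h=\sum c_{\alpha,\beta}\mathbf x^\alpha z^\beta$ is the convex hull of $\operatorname{supp}(h)+\mathbb R^{d+1}_{\ge0}$; for a compact face $\gamma$, $h_\gamma$ is the sum of the terms of $h$ whose exponents lie on $\gamma$. *)

From HB Require Import structures.
From mathcomp Require Import all_boot all_order all_algebra all_field.
From mathcomp Require Import mpoly.
Set Implicit Arguments. Unset Strict Implicit. Unset Printing Implicit Defensive.
Import Order.TTheory GRing.Theory Num.Theory.
Local Open Scope ring_scope.

(* Variables x_1..x_d are indices widen_ord i (i : 'I_d) of 'I_d.+1;
   the variable z is the index ord_max. *)

(* An element of k[[x]] [[z]] given by its coefficient function on
   exponents (alpha, beta) in N^d x N, encoded as multinomials of 'X_{1..d.+1}. *)
Definition xzseries (k : nzRingType) (d : nat) := 'X_{1..d.+1} -> k.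

(* f lies in k[[x]][z]: bounded degree in z. *)
Definition poly_in_z (k : nzRingType) d (f : xzseries k d) : Prop :=
  exists N : nat, forall m : 'X_{1..d.+1}, (N < m ord_max)%N -> f m = 0.

Definition dz (k : nzRingType) d (f : xzseries k d) : xzseries k d :=
  fun m => (m ord_max).+1%:R * f (m + U_(ord_max))%MM.

Definition wt d (w : 'I_d.+1 -> rat) (m : 'X_{1..d.+1}) : rat :=
  \sum_(i < d.+1) w i * (m i)%:R.

(* m is an exponent of f lying on the face of the Newton diagram of f
   cut out by the supporting functional w (i.e. minimizing <w,.>). *)
Definition on_face (k : nzRingType) d (f : xzseries k d) (w : 'I_d.+1 -> rat)
  (m : 'X_{1..d.+1}) : Prop :=
  f m != 0 /\ forall m', f m' != 0 -> wt w m <= wt w m'.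

(* w strictly positive: the face it exposes is compact *)
Definition pos_weight d (w : 'I_d.+1 -> rat) : Prop := forall i, 0 < w i.

Definition face_poly (k : nzRingType) d (f : xzseries k d) (w : 'I_d.+1 -> rat)
  (P : {mpoly k[d.+1]}) : Prop :=
  forall m, (on_face f w m -> P@_m = f m) /\ (~ on_face f w m -> P@_m = 0).

Definition xvar (k : nzRingType) d (i : 'I_d) : {mpoly k[d.+1]} :=
  'X_(widen_ord (leqnSn d) i).
Definition zvar (k : nzRingType) d : {mpoly k[d.+1]} := 'X_(ord_max).
Definition xmon (k : nzRingType) d (n : 'I_d -> nat) : {mpoly k[d.+1]} :=
  \prod_(i < d) xvar k i ^+ n i.

Definition gcd_vec d (q : 'I_d -> nat) (p : nat) : nat :=
  gcdn (\big[gcdn/0%N]_(i < d) q i) p.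

From HB Require Import structures.
From mathcomp Require Import all_boot all_order all_algebra all_field.
From mathcomp Require Import mpoly ring.
From Stdlib Require Import Classical.
Import Order.TTheory GRing.Theory Num.Theory.
Local Open Scope ring_scope.
Set Implicit Arguments. Unset Strict Implicit.

(** Because [e >= 1], the face of [f] exposed by [w] contains an exponent of
  positive [z]-degree. Differentiating in [z] shifts exponents by [-e_z] and, in
  characteristic zero, kills no coefficient of positive [z]-degree; hence the
  same weight [w] exposes on [f_z] the shifted face, whose face polynomial is
  [d f_Gamma / dz]. The displayed formula is then the Leibniz rule, using that
  every factor [z^p - mu_j x^q] has the same [z]-derivative [p z^(p-1)]. *)

Lemma prodr_exprSr (R : comNzRingType) (I : finType) (P : pred I)
    (F : I -> R) (m : I -> nat) : (forall j, 0 < m j)%N ->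
  \prod_(j | P j) F j ^+ m j = \prod_(j | P j) F j ^+ (m j - 1) * \prod_(j | P j) F j.
Proof.
move=> m_gt0; rewrite -big_split; apply: eq_bigr => j _ /=.
by rewrite -exprSr subn1 prednK.
Qed.

Section MPolyDerivation.
Variables (R : comNzRingType) (n : nat) (i : 'I_n).
Local Notation D := (mderiv i).

Lemma mderiv1 : D 1 = 0 :> {mpoly R[n]}.
Proof. by rewrite -mpolyC1 mderivC. Qed.

Lemma mderiv_exp (p : {mpoly R[n]}) m : D (p ^+ m) = D p * p ^+ m.-1 *+ m.
Proof.
elim: m => [|m IH]; first by rewrite expr0 mderiv1 mulr0n.
rewrite exprS mderivM IH; case: m {IH} => [|m] /=; last by rewrite exprS; ring.
by rewrite !expr0 mulr0n mulr0 addr0.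
Qed.

Lemma mderiv_prod_seq (I : eqType) (s : seq I) (F : I -> {mpoly R[n]}) :
  uniq s ->
  D (\prod_(j <- s) F j) = \sum_(l <- s) D (F l) * \prod_(j <- s | j != l) F j.
Proof.
elim: s => [|a s IH] /=; first by rewrite !big_nil mderiv1.
case/andP => a_notin_s uniq_s.
rewrite !big_cons mderivM IH // eqxx mulr_sumr.
congr (_ * _ + _).
  rewrite big_seq_cond [RHS]big_seq_cond; apply: eq_bigl => j.
  by case: (boolP (j \in s)) => //= js; rewrite (memPn a_notin_s).
rewrite !big_seq; apply: eq_bigr => l ls.
by rewrite big_cons eq_sym (memPn a_notin_s) // mulrCA.
Qed.

Lemma mderiv_prod (I : finType) (F : I -> {mpoly R[n]}) :
  D (\prod_j F j) = \sum_l D (F l) * \prod_(j | j != l) F j.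
Proof. exact: mderiv_prod_seq (index_enum_uniq I). Qed.

Lemma mderiv_prod_exp (I : finType) (F : I -> {mpoly R[n]}) (m : I -> nat) :
  (forall j, 0 < m j)%N ->
  D (\prod_j F j ^+ m j) =
  \prod_j F j ^+ (m j - 1) * \sum_l (m l)%:R *: (D (F l) * \prod_(j | j != l) F j).
Proof.
move=> m_gt0; rewrite mderiv_prod mulr_sumr; apply: eq_bigr => l _.
rewrite mderiv_exp [in RHS](bigD1 l) //= (prodr_exprSr (fun j => j != l)) //.
rewrite scaler_nat -subn1; ring.
Qed.

Lemma mderiv_prod_exp_const (I : finType) (F : I -> {mpoly R[n]}) (m : I -> nat) c :
  (forall j, 0 < m j)%N -> (forall j, D (F j) = c) ->
  D (\prod_j F j ^+ m j) =
  \prod_j F j ^+ (m j - 1) * (c * \sum_l (m l)%:R *: \prod_(j | j != l) F j).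
Proof.
move=> m_gt0 DF; rewrite mderiv_prod_exp //; congr (_ * _).
by rewrite mulr_sumr; apply: eq_bigr => l _; rewrite DF scalerAr.
Qed.

End MPolyDerivation.

Lemma wtD d (w : 'I_d.+1 -> rat) m1 m2 : wt w (m1 + m2)%MM = wt w m1 + wt w m2.
Proof. by rewrite /wt -big_split; apply: eq_bigr => j _; rewrite mnmDE natrD mulrDr. Qed.

Section FaceOfDerivative.
Variables (k : fieldType) (d : nat) (f : xzseries k d) (w : 'I_d.+1 -> rat).
Hypothesis char0 : [pchar k] =i pred0.
Local Notation uz := (U_(@ord_max d))%MM.

Lemma dz_neq0 m : (dz f m != 0) = (f (m + uz)%MM != 0).
Proof. by rewrite /dz mulf_eq0 negb_or ((pcharf0P _).1 char0). Qed.

Lemma on_face_dz m0 m : on_face f w (m0 + uz)%MM ->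
  on_face (dz f) w m <-> on_face f w (m + uz)%MM.
Proof.
move=> [fm0 min0]; split => [[dfm min_dz] | [fm min_f]].
  split; first by rewrite -dz_neq0.
  move=> m' fm'; apply: le_trans (min0 _ fm'); rewrite !wtD lerD2r.
  by apply: min_dz; rewrite dz_neq0.
split; first by rewrite dz_neq0.
by move=> m'; rewrite dz_neq0 => /min_f; rewrite !wtD lerD2r.
Qed.

Lemma face_poly_dz (Q : {mpoly k[d.+1]}) : Q != 0 ->
  face_poly f w (Q * 'X_ord_max) ->
  face_poly (dz f) w (mderiv ord_max (Q * 'X_ord_max)).
Proof.
move=> Q_neq0 faceQ.
have [m0 Qm0] : exists m0, Q@_m0 != 0.
  move: Q_neq0; rewrite -msupp_eq0; case supp: (msupp Q) => [|m0 s] // _.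
  by exists m0; rewrite -mcoeff_msupp supp mem_head.
have face0 : on_face f w (m0 + uz)%MM.
  apply: NNPP => off; move: Qm0; rewrite -(mcoeffMX _ uz) addmC.
  by rewrite (proj2 (faceQ _) off) eqxx.
move=> m; rewrite mcoeff_deriv; split => [on_m | off_m].
  by rewrite /dz mulr_natl (proj1 (faceQ _)) // -(on_face_dz _ face0).
by rewrite (proj2 (faceQ _)) ?mul0rn // -(on_face_dz _ face0).
Qed.

End FaceOfDerivative.

Section CoordinateMonomials.
Variables (k : fieldType) (d : nat).

Lemma xmon_neq0 (n : 'I_d -> nat) : xmon k n != 0.
Proof. by apply/prodf_neq0 => j _; rewrite expf_neq0 // -msupp_eq0 msuppX. Qed.

Lemma zvar_neq0 : zvar k d != 0.
Proof. by rewrite -msupp_eq0 msuppX. Qed.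

Lemma mderiv_xmon (n : 'I_d -> nat) : mderiv ord_max (xmon k n) = 0.
Proof.
rewrite mderiv_prod big1 // => j _; rewrite mderiv_exp mderivX mnm1E.
have /negbTE -> : widen_ord (leqnSn d) j != ord_max.
  by rewrite -val_eqE /= neq_ltn ltn_ord.
by rewrite scale0r !mul0r mul0rn mul0r.
Qed.

Lemma mderiv_zvar : mderiv ord_max (zvar k d) = 1.
Proof.
rewrite mderivX mnm1E eqxx scale1r.
have -> : (U_(@ord_max d) - U_(ord_max) = 0)%MM by apply/mnmP => j; rewrite !mnmE subnn.
exact: mpolyX0.
Qed.

End CoordinateMonomials.

Theorem lemma4p10 (k : closedFieldType) (d : nat) (f : xzseries k d)
  (w : 'I_d.+1 -> rat) (a : k) (n q : 'I_d -> nat) (e p r : nat)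
  (mu : 'I_r -> k) (mult : 'I_r -> nat) :
  [pchar k] =i pred0 ->
  poly_in_z f ->
  pos_weight w ->
  (1 <= e)%N -> (0 < p)%N -> gcd_vec q p = 1%N ->
  (0 < r)%N -> (forall j, 0 < mult j)%N ->
  injective mu -> (forall j, mu j != 0) -> a != 0 ->
  face_poly f w
    (a *: (xmon k n * zvar k d ^+ e *
       \prod_(j < r) (zvar k d ^+ p - mu j *: xmon k q) ^+ mult j)) ->
  exists2 w' : 'I_d.+1 -> rat, pos_weight w' &
  face_poly (dz f) w'
    (a *: (xmon k n * zvar k d ^+ (e - 1) *
       (\prod_(j < r) (zvar k d ^+ p - mu j *: xmon k q) ^+ (mult j - 1)) *
       (e%:R *: \prod_(j < r) (zvar k d ^+ p - mu j *: xmon k q)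
        + p%:R *: (zvar k d ^+ p *
            \sum_(i < r) (mult i)%:R *:
               \prod_(j < r | j != i) (zvar k d ^+ p - mu j *: xmon k q))))).
Proof.
move=> char0 _ w_pos e_gt0 p_gt0 _ _ mult_gt0 _ _ a_neq0 faceP; exists w => //.
case: e e_gt0 faceP => // e _; case: p p_gt0 => // p _; rewrite !subn1 /=.
set Z := zvar k d; set X := xmon k n => faceP.
have DG j : mderiv ord_max (Z ^+ p.+1 - mu j *: xmon k q) = Z ^+ p *+ p.+1.
  by rewrite mderivB mderivZ mderiv_xmon scaler0 subr0 mderiv_exp mderiv_zvar mul1r.
have G_neq0 j : Z ^+ p.+1 - mu j *: xmon k q != 0.
  apply: contra_eqN (DG j) => /eqP ->; rewrite mderiv0 eq_sym -scaler_nat.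
  by rewrite scaler_eq0 negb_or ((pcharf0P _).1 char0) expf_neq0 ?zvar_neq0.
set Pi := \prod_(j < r) _ ^+ mult j in faceP *.
have Q_neq0 : a *: (X * Z ^+ e * Pi) != 0.
  rewrite scaler_eq0 negb_or a_neq0 !mulf_neq0 ?xmon_neq0 ?expf_neq0 ?zvar_neq0 //.
  by apply/prodf_neq0 => j _; rewrite expf_neq0.
have QZ : a *: (X * Z ^+ e * Pi) * Z = a *: (X * Z ^+ e.+1 * Pi).
  by rewrite -scalerAl exprSr; congr (_ *: _); ring.
set T := (Y in face_poly _ _ Y).
suff -> : T = mderiv ord_max (a *: (X * Z ^+ e * Pi) * Z).
  by apply: face_poly_dz; rewrite // QZ.
rewrite QZ /T /Pi mderivZ !mderivM mderiv_xmon mderiv_exp mderiv_zvar.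
rewrite (mderiv_prod_exp_const mult_gt0 DG) [in RHS](prodr_exprSr xpredT) //.
congr (_ *: _); rewrite !scaler_nat /= ![Z ^+ _.+1]exprS; ring.
Qed.
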